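(* Let $e\geqslant 1$ be an integer and $b\geqslant 2$ an even integer, and let $D_{e,b}$ be the cycle set for $T_{e,b}$. Assume that for every $x\in D_{e,b}$ there exists a positive integer $h_x$ such that both $h_x+1$ and $h_x+x$ are $(e,b)$-happy. Then there exists a positive integer $h$ such that $h+x$ is $(e,b)$-happy for every $x\in D_{e,b}$.
   Context: For a positive integer $n=\sum_{j=0}^k a_j b^j$ with $0\leqslant a_j<b$, $T_{e,b}(n)=\sum_{j=0}^k a_j^e$; $T_{e,b}^r$ is the $r$-th iterate, $T_{e,b}^0(n)=n$. A positive integer $n$ is $(e,b)$-happy if $T_{e,b}^r(n)=1$ for some $r\geqslant 0$. A set $D_{e,b}$ of positive integers is a cycle set for $T_{e,b}$ if (1) for every positive integer $n$ there is $r\geqslant 0$ with $T_{e,b}^r(n)\in D_{e,b}$; (2) $T_{e,b}(x)\in D_{e,b}$ for all $x\in D_{e,b}$; (3) for every $x\in D_{e,b}$ there is $r\geqslant 1$ with $T_{e,b}^r(x)=x$. Such a set is finite and uniquely determined (it is the set of positive integers $x$ with $T_{e,b}^r(x)=x$ for some $r\geqslant1$). *)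

From mathcomp Require Import all_boot.
Set Implicit Arguments. Unset Strict Implicit. Unset Printing Implicit Defensive.

(* Sum of the e-th powers of the base-b digits of n, computed with fuel k
   (k >= n suffices, since each step divides by b >= 2). *)
Fixpoint Tfuel (k e b n : nat) : nat :=
  match k with
  | 0 => 0
  | k'.+1 => if n == 0 then 0 else (n %% b) ^ e + Tfuel k' e b (n %/ b)
  end.

Definition T (e b n : nat) : nat := Tfuel n e b n.

Definition happy (e b n : nat) : Prop := 0 < n /\ exists r, iter r (T e b) n = 1.

Definition is_cycle_set (e b : nat) (D : nat -> Prop) : Prop :=
  (forall x, D x -> 0 < x) /\
  (forall n, 0 < n -> exists r, D (iter r (T e b) n)) /\
  (forall x, D x -> D (T e b x)) /\
  (forall x, D x -> exists r, 0 < r /\ iter r (T e b) x = x).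

(* D is finite, because T n < n for all large n, so every cycle lies below a
   fixed bound.  Induct on the number of distinct values in {1} ∪ S, S ⊆ D.
   If y ≠ 1 lies in S, then for R large, x ↦ T^R(h_y + x) maps S into D and
   sends both 1 and y to 1, so its image has fewer distinct values, and by
   induction some H > 0 makes H + T^R(h_y + x) happy for all x in S.  Since
   T(m b^k + c) = T m + T c for c < b^k and the base-b repunit of length H
   has T-value H, prepending suitable digits to h_y yields G with
   T^R(G + h_y + x) = H + T^R(h_y + x), and h := G + h_y works. *)
From mathcomp Require Import all_boot zify.
From Stdlib Require Import Classical.

Set Implicit Arguments.
Unset Strict Implicit.

Definition eventually (P : nat -> Prop) : Prop :=
  exists r0, forall r, r0 <= r -> P r.

Lemma eventually_and (P Q : nat -> Prop) :
  eventually P -> eventually Q -> eventually (fun r => P r /\ Q r).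
Proof.
move=> [p HP] [q HQ]; exists (maxn p q) => r hr.
by split; [apply: HP | apply: HQ]; lia.
Qed.

Lemma eventually_all (P : nat -> nat -> Prop) (s : seq nat) :
  (forall x, x \in s -> eventually (P x)) ->
  eventually (fun r => forall x, x \in s -> P x r).
Proof.
elim: s => [|y s IH] Hs; first by exists 0.
have [r0 Hy] := Hs y (mem_head y s).
have [r1 Hr] := IH (fun x hx => Hs x (mem_behead (s := y :: s) hx)).
exists (maxn r0 r1) => r hr x; rewrite inE => /orP[/eqP -> | hx].
  by apply: Hy; lia.
by apply: Hr => //; lia.
Qed.

Lemma bounded_pred_enum (P : nat -> Prop) B :
  (forall x, P x -> x <= B) -> exists s : seq nat, forall x, P x <-> x \in s.
Proof.
move=> PB; suff [s Hs] : exists s : seq nat, forall x, P x /\ x <= B <-> x \in s.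
  by exists s => x; split=> [Px | /Hs[] //]; apply/Hs; split; last exact: PB.
elim: B {PB} => [|B [s Hs]].
  have [P0 | nP0] := classic (P 0).
    by exists [:: 0] => x; rewrite inE leqn0; split=> [[_ ->] | /eqP ->].
  by exists [::] => x; rewrite leqn0; split=> // -[Px /eqP x0]; subst.
have [PB | nPB] := classic (P B.+1).
  exists (B.+1 :: s) => x; rewrite inE leq_eqVlt ltnS.
  split=> [[Px /orP[-> // | xB]] | /orP[/eqP -> | /Hs[Px ->]]]; last by rewrite orbT.
    by apply/orP; right; apply/Hs.
  by rewrite eqxx.
exists s => x; rewrite leq_eqVlt ltnS.
split=> [[Px /orP[/eqP x_eq | xB]] | /Hs[Px ->]]; rewrite ?orbT //; first by subst.
exact/Hs.
Qed.

Lemma iter_le_maxn (f : nat -> nat) B :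
  (forall n, n <= B -> f n <= B) -> (forall n, B < n -> f n < n) ->
  forall i n, iter i f n <= maxn n B.
Proof.
move=> small big; elim=> [|i IH] n /=; first exact: leq_maxl.
have [le_B | gt_B] := leqP (iter i f n) B.
  by apply: leq_trans (small _ le_B) (leq_maxr _ _).
by apply: leq_trans (IH n); apply: ltnW; apply: big.
Qed.

Lemma periodic_le (f : nat -> nat) B x r :
  (forall n, n <= B -> f n <= B) -> (forall n, B < n -> f n < n) ->
  0 < r -> iter r f x = x -> x <= B.
Proof.
move=> small big; case: r => // r _ fx; rewrite leqNgt; apply/negP => gt_B.
have := iter_le_maxn small big r (f x); rewrite -iterSr fx.
by have := big x gt_B; lia.
Qed.

Lemma size_undup_map_lt (T : eqType) (f : T -> T) (a y : T) (s : seq T) :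
  y \in s -> y != a -> f a = a -> f y = a ->
  size (undup (a :: map f s)) < size (undup (a :: s)).
Proof.
move=> ys ya fa fy; set t := undup (a :: s).
have t_uniq : uniq t := undup_uniq _.
have yt : y \in t by rewrite mem_undup inE ys orbT.
have sub : {subset undup (a :: map f s) <= map f (rem y t)}.
  have aty : a \in rem y t.
    by rewrite (mem_rem_uniq _ t_uniq) inE eq_sym ya mem_undup mem_head.
  move=> z; rewrite mem_undup inE => /orP[/eqP -> | /mapP[x xs ->]].
    by rewrite -{1}fa map_f.
  have [-> | xy] := eqVneq x y; first by rewrite fy -{1}fa map_f.
  by rewrite map_f // (mem_rem_uniq _ t_uniq) inE xy mem_undup inE xs orbT.
apply: leq_ltn_trans (uniq_leq_size (undup_uniq _) sub) _.
have : 0 < size t by rewrite lt0n size_eq0; apply: contraTneq yt => ->.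
by rewrite size_map size_rem //; lia.
Qed.

Section DigitPowerSum.
Variables (e b : nat).
Hypotheses (e_gt0 : 0 < e) (b_gt1 : 1 < b).

Lemma Tfuel_eq k1 k2 n : n <= k1 -> n <= k2 -> Tfuel k1 e b n = Tfuel k2 e b n.
Proof.
elim: k1 k2 n => [|k1 IH] [|k2] n /=.
- by [].
- by rewrite leqn0 => /eqP ->.
- by move=> _; rewrite leqn0 => /eqP ->.
- move=> le_k1 le_k2; case: eqP => // /eqP n_neq0.
  have : n %/ b < n by rewrite ltn_Pdiv // lt0n.
  by move=> lt_n; rewrite (IH k2) //; lia.
Qed.

Lemma T_rec n : T e b n = (n %% b) ^ e + T e b (n %/ b).
Proof.
case: n => [|n]; first by rewrite mod0n div0n exp0n.
have : n.+1 %/ b < n.+1 by apply: ltn_Pdiv.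
by move=> lt_n; rewrite /T /=; congr (_ + _); apply: Tfuel_eq; lia.
Qed.

Lemma T1 : T e b 1 = 1.
Proof. by rewrite T_rec modn_small // divn_small // exp1n. Qed.

Lemma T_shift_add k m c : c < b ^ k -> T e b (m * b ^ k + c) = T e b m + T e b c.
Proof.
elim: k m c => [|k IH] m c.
  by rewrite expn0 ltnS leqn0 => /eqP ->; rewrite muln1 addn0 -[T e b 0]/0 addn0.
move=> c_lt; have b_gt0 : 0 < b by lia.
rewrite T_rec expnSr mulnA modnMDl divnMDl // IH; last by rewrite ltn_divLR // -expnSr.
by rewrite [T e b c]T_rec addnCA.
Qed.

Fixpoint repunit H := if H is H'.+1 then repunit H' * b + 1 else 0.

Lemma T_repunit H : T e b (repunit H) = H.
Proof.
elim: H => [|H IH] //=.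
by rewrite -{2}(expn1 b) T_shift_add ?expn1 // IH T1 addn1.
Qed.

Lemma T_sublinear : exists K, forall n, 2 * T e b n <= n + K.
Proof.
pose C := b ^ e; have C_gt0 : 0 < C by rewrite expn_gt0; lia.
exists (2 * \max_(i < 4 * C) T e b i); elim/ltn_ind => n IH.
have [small | big] := ltnP n (4 * C).
  have := leq_bigmax (F := fun i : 'I_(4 * C) => T e b i) (Ordinal small).
  by rewrite /=; lia.
have digit : (n %% b) ^ e <= C by rewrite leq_exp2r // ltnW // ltn_pmod; lia.
have quot : n %/ b * 2 <= n.
  by apply: leq_trans (leq_divM n b); rewrite leq_mul2l; lia.
have n_gt0 : 0 < n by lia.
have := IH (n %/ b) (ltn_Pdiv b_gt1 n_gt0).
by rewrite (T_rec n); lia.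
Qed.

Lemma T_trapping_bound : exists B,
  (forall n, n <= B -> T e b n <= B) /\ (forall n, B < n -> T e b n < n).
Proof.
have [K HK] := T_sublinear.
exists (maxn K (\max_(i < K.+1) T e b i)); split=> n; last by have := HK n; lia.
have [le_K | gt_K] := leqP n K; last by have := HK n; lia.
have := leq_bigmax (F := fun i : 'I_K.+1 => T e b i) (Ordinal (le_K : n < K.+1)).
by rewrite /=; lia.
Qed.

Lemma iter_T1 r : iter r (T e b) 1 = 1.
Proof. by elim: r => //= r ->; rewrite T1. Qed.

Lemma happy_eventually n : happy e b n -> eventually (fun r => iter r (T e b) n = 1).
Proof.
by move=> [_ [r0 Hr0]]; exists r0 => r le_r; rewrite -(subnK le_r) iterD Hr0 iter_T1.
Qed.

Lemma happy_iter r n : 0 < n -> happy e b (iter r (T e b) n) -> happy e b n.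
Proof. by move=> n_gt0 [_ [s Hs]]; split=> //; exists (s + r); rewrite iterD. Qed.

Lemma T_prepend A M : 0 < A ->
  exists G, 0 < G /\ forall c, c <= M -> T e b (G + c) = A + T e b c.
Proof.
move=> A_gt0; exists (repunit A * b ^ M); split.
  by case: A A_gt0 => // A _; rewrite muln_gt0 /= addn1 expn_gt0 (ltnW b_gt1).
move=> c le_c; rewrite T_shift_add ?T_repunit //.
exact: leq_ltn_trans le_c (ltn_expl _ b_gt1).
Qed.

Lemma iter_T_prepend R H M : 0 < H ->
  exists G, 0 < G /\ forall c, c <= M -> iter R (T e b) (G + c) = H + iter R (T e b) c.
Proof.
elim: R H M => [|R IH] H M H_gt0; first by exists H.
set M' := \max_(i < M.+1) T e b i.
have [G [G_gt0 HG]] := IH H M' H_gt0.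
have [G' [G'_gt0 HG']] := T_prepend M G_gt0.
exists G'; split=> // c le_c; rewrite !iterSr HG' // HG //.
exact: (leq_bigmax (F := fun i : 'I_M.+1 => T e b i) (Ordinal (le_c : c < M.+1))).
Qed.

Lemma happy_lift R k H (s : seq nat) : 0 < H ->
  (forall x, x \in s -> happy e b (H + iter R (T e b) (k + x))) ->
  exists h, 0 < h /\ forall x, x \in s -> happy e b (h + x).
Proof.
move=> H_gt0 HH; set M := \max_(x <- s) (k + x).
have [G [G_gt0 HG]] := iter_T_prepend R M H_gt0.
exists (G + k); split=> [|x xs]; first by rewrite addn_gt0 G_gt0.
apply: (happy_iter (r := R)); first by rewrite !addn_gt0 G_gt0.
rewrite -addnA HG; first exact: HH.
exact: (leq_bigmax_seq (F := fun x => k + x) x xs isT).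
Qed.

Section CycleSet.
Variable D : nat -> Prop.
Hypothesis D_cycle : is_cycle_set e b D.

Lemma D_iter x r : D x -> D (iter r (T e b) x).
Proof. by move=> Dx; case: D_cycle => _ [_ [DT _]]; elim: r => //= r; apply: DT. Qed.

Lemma D1 : D 1.
Proof. by case: D_cycle => _ [enter _]; have [r] := enter 1 isT; rewrite iter_T1. Qed.

Lemma D_eventually n : 0 < n -> eventually (fun r => D (iter r (T e b) n)).
Proof.
case: D_cycle => _ [enter _] /enter[r0 Dr0].
by exists r0 => r le_r; rewrite -(subnK le_r) iterD; apply: D_iter.
Qed.

Lemma D_bounded : exists B, forall x, D x -> x <= B.
Proof.
have [B [small big]] := T_trapping_bound.
exists B => x Dx; case: D_cycle => _ [_ [_ periodic]].
have [r [r_gt0 Hr]] := periodic x Dx.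
exact: periodic_le small big r_gt0 Hr.
Qed.

Hypothesis happy_pair : forall x, D x ->
  exists hx, 0 < hx /\ happy e b (hx + 1) /\ happy e b (hx + x).

Lemma happy_shift_seq (s : seq nat) : (forall x, x \in s -> D x) ->
  exists h, 0 < h /\ forall x, x \in s -> happy e b (h + x).
Proof.
have [n] := ubnP (size (undup (1 :: s))); elim: n s => // n IH s lt_n sD.
have [/hasP[y ys y_neq1] | /hasPn all1] := boolP (has (fun y => y != 1) s); last first.
  have [h [h_gt0 [h1 _]]] := happy_pair D1.
  by exists h; split=> // x /all1 /negPn /eqP ->.
have [hy [hy_gt0 [hy1 hyy]]] := happy_pair (sD y ys).
have [R HR] : eventually (fun r => (forall x, x \in s -> D (iter r (T e b) (hy + x))) /\
    iter r (T e b) (hy + 1) = 1 /\ iter r (T e b) (hy + y) = 1).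
  apply: eventually_and; last by apply: eventually_and; apply: happy_eventually.
  by apply: eventually_all => x _; apply: D_eventually; rewrite addn_gt0 hy_gt0.
have [inD [phi1 phiy]] := HR R (leqnn R).
pose phi x := iter R (T e b) (hy + x).
have [H [H_gt0 HH]] : exists H, 0 < H /\ forall z, z \in map phi s -> happy e b (H + z).
  apply: IH => [|_ /mapP[x xs ->]]; last exact: inD.
  exact: leq_trans (size_undup_map_lt (f := phi) ys y_neq1 phi1 phiy) lt_n.
by apply: (happy_lift (R := R) (k := hy) H_gt0) => x xs; apply: HH; apply: map_f.
Qed.

End CycleSet.

End DigitPowerSum.

Theorem lemma2p2 (e b : nat) (D : nat -> Prop) :
  1 <= e -> 2 <= b -> ~~ odd b ->
  is_cycle_set e b D ->
  (forall x, D x -> exists hx, 0 < hx /\ happy e b (hx + 1) /\ happy e b (hx + x)) ->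
  exists h, 0 < h /\ forall x, D x -> happy e b (h + x).
Proof.
move=> e_gt0 b_gt1 _ D_cycle happy_pair.
have [B DB] := D_bounded e_gt0 b_gt1 D_cycle.
have [s Ds] := bounded_pred_enum DB.
have [h [h_gt0 Hh]] :=
  happy_shift_seq e_gt0 b_gt1 D_cycle happy_pair (s := s) (fun x => proj2 (Ds x)).
by exists h; split=> // x /Ds /Hh.
Qed.
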